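(* Let $n\geq 2$ be finite. Then $RTA_n=\mathbf{SP}\{\mathfrak{A}_{nk}:k\leq n\}$, i.e. every subdirect product of full transposition set algebras of dimension $n$ is (up to isomorphism) a subalgebra of a direct product of copies of the finitely many algebras $\mathfrak{A}_{nk}$, $k\leq n$, and conversely.
   Context: For a set $U$ and ordinal $\alpha$, the full transposition set algebra of dimension $\alpha$ with base $U$ is $\langle\mathcal{P}({}^\alpha U);\cap,-,S_{ij}\rangle_{i\neq j\in\alpha}$, where $[i,j]$ is the transposition of $\alpha$ swapping $i$ and $j$ and $S_{ij}(X)=\{q\in{}^\alpha U:q\circ[i,j]\in X\}$. $SetTA_\alpha$ is the class of subalgebras of such full algebras, and $RTA_\alpha=\mathbf{SP}\,SetTA_\alpha$ (closure under isomorphic copies of subalgebras and direct products). For $k\leq n$, $\mathfrak{A}_{nk}$ is the full transposition set algebra of dimension $n$ with base $k=\{0,\dots,k-1\}$. *)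

From mathcomp Require Import all_boot all_fingroup.
Set Implicit Arguments. Unset Strict Implicit. Unset Printing Implicit Defensive.

(* Algebras of the similarity type of transposition algebras of dimension n:
   a carrier with a binary meet (cap), a complement (-), and unary operations
   S_ij indexed by i, j : 'I_n (only those with i != j are part of the
   signature; homomorphisms are only required to preserve those). *)
Record TA (n : nat) := MkTA {
  tacar :> Type;
  tameet : tacar -> tacar -> tacar;
  tacompl : tacar -> tacar;
  tasub : 'I_n -> 'I_n -> tacar -> tacar
}.

(* Full transposition set algebra of dimension n with base U:
   universe P(^n U), subsets represented as predicates on 'I_n -> U.
   S_ij X = { q | q o [i,j] \in X } with [i,j] = tperm i j. *)
Definition fullTA (n : nat) (U : Type) : TA n :=
  @MkTA n ((('I_n -> U) -> Prop))
    (fun X Y q => X q /\ Y q)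
    (fun X q => ~ X q)
    (fun i j X q => X (fun k => q (tperm i j k))).

Definition A_nk (n k : nat) : TA n := fullTA n 'I_k.

Definition prodTA (n : nat) (J : Type) (B : J -> TA n) : TA n :=
  @MkTA n (forall j : J, B j)
    (fun x y j => tameet (x j) (y j))
    (fun x j => tacompl (x j))
    (fun i i' x j => tasub i i' (x j)).

Definition is_hom (n : nat) (A B : TA n) (h : A -> B) : Prop :=
  (forall x y : A, h (tameet x y) = tameet (h x) (h y)) /\
  (forall x : A, h (tacompl x) = tacompl (h x)) /\
  (forall (i j : 'I_n) (x : A), i != j -> h (tasub i j x) = tasub i j (h x)).

Definition embeds (n : nat) (A B : TA n) : Prop :=
  exists h : A -> B, injective h /\ is_hom h.

Definition SP (n : nat) (K : TA n -> Prop) (A : TA n) : Prop :=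
  exists (J : Type) (B : J -> TA n), (forall j, K (B j)) /\ embeds A (prodTA B).

Definition SetTA (n : nat) (B : TA n) : Prop :=
  exists U : Type, embeds B (fullTA n U).

Definition RTA (n : nat) : TA n -> Prop := SP (@SetTA n).

Definition Ank_class (n : nat) (B : TA n) : Prop :=
  exists k, k <= n /\ B = A_nk n k.

From mathcomp Require Import all_boot all_fingroup.
From Stdlib Require Import FunctionalExtensionality ClassicalEpsilon.

(* Both classes are SP-closures, and SP is a closure operator:
   if every member of K lies in SP K', then SP K is contained in SP K'
   (products of products flatten into one product, embeddings compose).
   Hence it suffices to compare the generators:
   - every A_{nk} is a full set algebra, so { A_{nk} : k <= n } lies in
     SetTA_n, giving SP {A_{nk}} <= SP SetTA_n = RTA_n;
   - every full set algebra P(^n U) embeds into a power of A_{nn}: a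
     subset X of ^n U is sent to the family, indexed by the points
     q : n -> U, of its pull-backs {p : n -> n | q o p \in X}.  This map
     is injective (look at p = id) and commutes with the transpositions
     because (q o p) o [i,j] = q o (p o [i,j]).  Hence SetTA_n lies in
     SP {A_{nk}}, giving RTA_n = SP SetTA_n <= SP {A_{nk}}.
   The argument works for every n. *)

Set Implicit Arguments.

Section Embeddings.

Variable n : nat.

Lemma is_hom_comp (A B C : TA n) (f : A -> B) (g : B -> C) :
  is_hom f -> is_hom g -> is_hom (fun x => g (f x)).
Proof.
move=> [f1 [f2 f3]] [g1 [g2 g3]]; split; [|split].
- by move=> x y; rewrite f1 g1.
- by move=> x; rewrite f2 g2.
- by move=> i j x nij; rewrite f3 // g3.
Qed.

Lemma embeds_trans (A B C : TA n) : embeds A B -> embeds B C -> embeds A C.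
Proof.
move=> [f [f_inj f_hom]] [g [g_inj g_hom]].
exists (fun x => g (f x)); split; last exact: is_hom_comp.
by move=> x y /g_inj /f_inj.
Qed.

Lemma embeds_prod (J : Type) (A C : J -> TA n) :
  (forall j, embeds (A j) (C j)) -> embeds (prodTA A) (prodTA C).
Proof.
move=> AC.
pose h j := proj1_sig (constructive_indefinite_description _ (AC j)).
have h_emb j : injective (h j) /\ is_hom (h j) :=
  proj2_sig (constructive_indefinite_description _ (AC j)).
have h_inj j := proj1 (h_emb j); have h_hom j := proj2 (h_emb j).
exists (fun (x : prodTA A) j => h j (x j) : C j); split.
  move=> x y Exy; apply: functional_extensionality_dep => j.
  exact: h_inj (equal_f_dep Exy j).
split; [|split].
- move=> x y; apply: functional_extensionality_dep => j /=.
  by have [-> _] := h_hom j.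
- move=> x; apply: functional_extensionality_dep => j /=.
  by have [_ [-> _]] := h_hom j.
- move=> i i' x nii'; apply: functional_extensionality_dep => j /=.
  by have [_ [_ ->]] := h_hom j.
Qed.

Lemma embeds_prod_flatten (J : Type) (I : J -> Type)
    (B : forall j, I j -> TA n) :
  embeds (prodTA (fun j => prodTA (B j)))
         (prodTA (fun d : {j : J & I j} => B (projT1 d) (projT2 d))).
Proof.
exists (fun (x : prodTA (fun j => prodTA (B j))) (d : {j : J & I j}) =>
          x (projT1 d) (projT2 d)); split => //.
move=> x y Exy; do 2 apply: functional_extensionality_dep => ?.
exact: (equal_f_dep Exy (existT _ _ _)).
Qed.

End Embeddings.

Lemma SP_closed (n : nat) (K K' : TA n -> Prop) :
  (forall B, K B -> SP K' B) -> forall A, SP K A -> SP K' A.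
Proof.
move=> KK' A [J [B [KB EA]]].
have SPB j := KK' _ (KB j).
pose J' j := proj1_sig (constructive_indefinite_description _ (SPB j)).
have SPB' j := proj2_sig (constructive_indefinite_description _ (SPB j)).
pose B' j := proj1_sig (constructive_indefinite_description _ (SPB' j)).
have B'_spec j : (forall j', K' (B' j j')) /\ embeds (B j) (prodTA (B' j)) :=
  proj2_sig (constructive_indefinite_description _ (SPB' j)).
have K'B' j := proj1 (B'_spec j); have EB j := proj2 (B'_spec j).
exists {j : J & J' j}, (fun d => B' (projT1 d) (projT2 d)); split.
  by move=> [j j']; apply: K'B'.
apply: (embeds_trans EA).
apply: (embeds_trans (@embeds_prod _ _ B (fun j => prodTA (B' j)) EB)).
exact: embeds_prod_flatten.
Qed.

(* Every full set algebra of dimension n embeds into a power of A_{nn}: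
   X is sent to the family of its pull-backs along the points q : n -> U. *)
Lemma fullTA_embeds_power_Ann (n : nat) (U : Type) :
  embeds (fullTA n U) (prodTA (fun _ : 'I_n -> U => A_nk n n)).
Proof.
pose pullback (X : fullTA n U) (q : 'I_n -> U) : A_nk n n :=
  fun p => X (fun k => q (p k)).
exists pullback; split.
  move=> X Y EXY; apply: functional_extensionality => q.
  exact: (equal_f (equal_f_dep EXY q) id).
by split; [|split].
Qed.

Lemma SetTA_in_SP_Ank (n : nat) (B : TA n) : SetTA B -> SP (@Ank_class n) B.
Proof.
move=> [U EB]; exists ('I_n -> U), (fun _ => A_nk n n); split.
  by move=> _; exists n.
exact: embeds_trans EB (fullTA_embeds_power_Ann n U).
Qed.

Lemma Ank_in_SP_SetTA (n : nat) (B : TA n) : Ank_class B -> SP (@SetTA n) B.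
Proof.
move=> [k [_ ->]]; exists unit, (fun _ => A_nk n k); split.
  by move=> _; exists 'I_k, id; split; [|split; [|split]].
exists (fun (X : A_nk n k) (_ : unit) => X); split => //.
by move=> X Y /(equal_f_dep^~ tt).
Qed.

Theorem theorem3p7 (n : nat) (hn : 2 <= n) (A : TA n) :
  RTA A <-> SP (@Ank_class n) A.
Proof.
split; apply: SP_closed => B.
- exact: SetTA_in_SP_Ank.
- exact: Ank_in_SP_SetTA.
Qed.
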